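(* Let $A\in M_2(\mathbb{Z})$ be an expanding matrix whose characteristic polynomial is $x^2+px+q$ with $p\in\mathbb{Z}$ and $|q|=3$, and let $v\in\mathbb{R}^2$ be such that $\{v,Av\}$ is linearly independent. Then $T(A,\mathcal{D})$ is connected for $\mathcal{D}=\{0,v,Av+v\}$ and for $\mathcal{D}=\{0,v,-Av+v\}$.
   Context: A real square matrix is expanding if all its eigenvalues have modulus strictly larger than $1$. For an expanding matrix $A\in M_n(\mathbb{Z})$ and a finite set $\mathcal{D}\subset\mathbb{R}^n$ with $|\mathcal D|=|\det A|$, the self-affine set $T(A,\mathcal{D})$ is the unique nonempty compact set $T$ with $AT=T+\mathcal{D}$; equivalently $T=\{\sum_{i=1}^\infty A^{-i}d_{j_i}: d_{j_i}\in\mathcal{D}\}$. *)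

From Stdlib Require Import Reals List ZArith.
Open Scope R_scope.

Definition vec := (R * R)%type.
Definition vadd (x y : vec) : vec := (fst x + fst y, snd x + snd y).
Definition vopp (x : vec) : vec := (- fst x, - snd x).
Definition vscale (r : R) (x : vec) : vec := (r * fst x, r * snd x).
Definition vzero : vec := (0, 0).

Record M2 := mkM2 { e11 : R; e12 : R; e21 : R; e22 : R }.

Definition M2Z (a b c d : Z) : M2 := mkM2 (IZR a) (IZR b) (IZR c) (IZR d).

Definition mapply (A : M2) (x : vec) : vec :=
  (e11 A * fst x + e12 A * snd x, e21 A * fst x + e22 A * snd x).

Definition mdet (A : M2) : R := e11 A * e22 A - e12 A * e21 A.

(* Inverse matrix (meaningful when det A <> 0). *)
Definition minv (A : M2) : M2 :=
  mkM2 (e22 A / mdet A) (- e12 A / mdet A) (- e21 A / mdet A) (e11 A / mdet A).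

(* Characteristic polynomial det(xI - A) equals x^2 + p x + q (as polynomial
   functions over R, which determines the polynomial). *)
Definition char_poly_is (A : M2) (p q : R) : Prop :=
  forall x : R, (x - e11 A) * (x - e22 A) - e12 A * e21 A = x ^ 2 + p * x + q.

(* Complex numbers as pairs (re, im). *)
Definition Cmul (z w : R * R) : R * R :=
  (fst z * fst w - snd z * snd w, fst z * snd w + snd z * fst w).
Definition Csub (z w : R * R) : R * R := (fst z - fst w, snd z - snd w).
Definition Creal (r : R) : R * R := (r, 0).

(* z is a (complex) eigenvalue of A : det(A - z I) = 0 in C. *)
Definition is_eigenvalue (A : M2) (z : R * R) : Prop :=
  Csub (Cmul (Csub (Creal (e11 A)) z) (Csub (Creal (e22 A)) z))
       (Creal (e12 A * e21 A)) = (0, 0).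

Definition expanding (A : M2) : Prop :=
  forall z : R * R, is_eigenvalue A z -> fst z ^ 2 + snd z ^ 2 > 1.

Definition lin_indep2 (u w : vec) : Prop :=
  forall a b : R, vadd (vscale a u) (vscale b w) = vzero -> a = 0 /\ b = 0.

Fixpoint psum (A : M2) (dig : nat -> vec) (n : nat) : vec :=
  match n with
  | O => vzero
  | S k => vadd (psum A dig k) (Nat.iter (S k) (mapply (minv A)) (dig (S k)))
  end.

Definition vec_cv (u : nat -> vec) (l : vec) : Prop :=
  Un_cv (fun n => fst (u n)) (fst l) /\ Un_cv (fun n => snd (u n)) (snd l).

Definition self_affine_set (A : M2) (D : list vec) : vec -> Prop :=
  fun x => exists dig : nat -> vec,
    (forall i, In (dig i) D) /\ vec_cv (psum A dig) x.

Definition vdist (x y : vec) : R :=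
  sqrt ((fst x - fst y) ^ 2 + (snd x - snd y) ^ 2).

Definition open2 (U : vec -> Prop) : Prop :=
  forall x, U x -> exists eps, eps > 0 /\ forall y, vdist x y < eps -> U y.

Definition connected2 (S : vec -> Prop) : Prop :=
  ~ exists U V : vec -> Prop,
      open2 U /\ open2 V /\
      (forall x, S x -> U x \/ V x) /\
      (exists x, S x /\ U x) /\ (exists x, S x /\ V x) /\
      (forall x, S x -> U x -> V x -> False).

(* Write w = Av; then A w = -p w - q v.

   Cayley–Hamilton gives A⁻² = (-p/q)A⁻¹ - (1/q)I; the
      expanding hypothesis forces |p| ≤ 3 if q = 3 and |p| ≤ 1 if q = -3, and
      then the coordinates of A⁻ⁿx solve a scalar recurrence whose solutions
      decay like (5/6)ⁿ.  Hence every digit series converges and T is bounded.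
   2. Set equation.  T = ⋃_d A⁻¹(d + T); iterating, T is covered by the
      cylinders of level n, images of T of diameter O((5/6)ⁿ).
   3. Hata's criterion.  If d₀ + T meets d₁ + T, and d₂ + T meets d₀ + T or
      d₁ + T, then T is connected: by a König argument a separation of T is
      constant on every cylinder of some level N, and the intersections then
      propagate one side to all of T by induction on N.
   4. Neighbour automaton.  A state s = (s₁, s₂) stands for s₁v + s₂w, and
      s = A⁻¹(dᵢ - dⱼ + s') with s' = As - (dᵢ - dⱼ).  A finite table of states
      closed under such steps yields, for each of its states, two digit
      sequences whose sums differ by s, so s ∈ T - T.  For the ten admissible
      (p, q) and both digit sets an explicit table is checked by computation,
      and the corollary follows from 1–4. *)

From Stdlib Require Import Reals List ZArith Lra Lia Classical ClassicalEpsilon.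
Import ListNotations.
Open Scope R_scope.

Lemma vec_ext (x y : vec) : fst x = fst y -> snd x = snd y -> x = y.
Proof. destruct x, y; simpl; intros; subst; reflexivity. Qed.

Definition vsub (x y : vec) : vec := vadd x (vopp y).

Ltac vec_ring :=
  apply vec_ext; unfold vsub, vadd, vopp, vscale, vzero, mapply; cbn [fst snd]; ring.

(* The l¹ norm on R², and the sum of the absolute values of the entries of a
   matrix, which bounds the operator norm for l¹. *)
Definition norm1 (x : vec) : R := Rabs (fst x) + Rabs (snd x).
Definition mnorm1 (M : M2) : R :=
  Rabs (e11 M) + Rabs (e12 M) + Rabs (e21 M) + Rabs (e22 M).

Lemma norm1_ge0 x : 0 <= norm1 x.
Proof. unfold norm1; pose proof (Rabs_pos (fst x)); pose proof (Rabs_pos (snd x)); lra. Qed.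

Lemma mnorm1_ge0 M : 0 <= mnorm1 M.
Proof.
  unfold mnorm1; pose proof (Rabs_pos (e11 M)); pose proof (Rabs_pos (e12 M));
  pose proof (Rabs_pos (e21 M)); pose proof (Rabs_pos (e22 M)); lra.
Qed.

Lemma norm1_add x y : norm1 (vadd x y) <= norm1 x + norm1 y.
Proof.
  unfold norm1, vadd; cbn [fst snd].
  pose proof (Rabs_triang (fst x) (fst y)); pose proof (Rabs_triang (snd x) (snd y)); lra.
Qed.

Lemma norm1_opp x : norm1 (vopp x) = norm1 x.
Proof. unfold norm1, vopp; cbn [fst snd]; rewrite !Rabs_Ropp; reflexivity. Qed.

Lemma norm1_sub x y : norm1 (vsub x y) <= norm1 x + norm1 y.
Proof. unfold vsub; rewrite <- (norm1_opp y); apply norm1_add. Qed.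

Lemma vsub_eq_add {t t' x : vec} : vsub t t' = x -> t = vadd x t'.
Proof. intros <-. vec_ring. Qed.

Lemma mapply_add M x y : mapply M (vadd x y) = vadd (mapply M x) (mapply M y).
Proof. vec_ring. Qed.

Lemma mapply_sub M x y : mapply M (vsub x y) = vsub (mapply M x) (mapply M y).
Proof. vec_ring. Qed.

Lemma norm1_mapply M x : norm1 (mapply M x) <= mnorm1 M * norm1 x.
Proof.
  assert (lin : forall a b x y, Rabs (a * x + b * y) <= Rabs a * Rabs x + Rabs b * Rabs y).
  { intros. eapply Rle_trans; [apply Rabs_triang|]. rewrite !Rabs_mult; lra. }
  unfold norm1, mnorm1, mapply; cbn [fst snd].
  pose proof (lin (e11 M) (e12 M) (fst x) (snd x)).
  pose proof (lin (e21 M) (e22 M) (fst x) (snd x)).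
  pose proof (Rabs_pos (e11 M)); pose proof (Rabs_pos (e12 M));
  pose proof (Rabs_pos (e21 M)); pose proof (Rabs_pos (e22 M));
  pose proof (Rabs_pos (fst x)); pose proof (Rabs_pos (snd x)).
  nra.
Qed.

Lemma vdist_le_norm1 x y : vdist x y <= norm1 (vsub x y).
Proof.
  unfold vdist, norm1, vsub, vadd, vopp; cbn [fst snd].
  set (a := fst x + - fst y). set (b := snd x + - snd y).
  replace (fst x - fst y) with a by (unfold a; ring).
  replace (snd x - snd y) with b by (unfold b; ring).
  pose proof (Rabs_pos a); pose proof (Rabs_pos b).
  rewrite <- (sqrt_pow2 (Rabs a + Rabs b)) by lra.
  apply sqrt_le_1_alt. rewrite <- (pow2_abs a), <- (pow2_abs b). nra.
Qed.

Definition mpow (M : M2) (n : nat) (x : vec) : vec := Nat.iter n (mapply M) x.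

Lemma mpow_S M n x : mpow M (S n) x = mapply M (mpow M n x).
Proof. reflexivity. Qed.

Lemma mpow_add M n x y : mpow M n (vadd x y) = vadd (mpow M n x) (mpow M n y).
Proof. induction n; [reflexivity|]. rewrite !mpow_S, IHn, mapply_add. reflexivity. Qed.

Lemma mpow_sub M n x y : mpow M n (vsub x y) = vsub (mpow M n x) (mpow M n y).
Proof. induction n; [reflexivity|]. rewrite !mpow_S, IHn, mapply_sub. reflexivity. Qed.

Lemma mpow_mapply M n x : mpow M n (mapply M x) = mapply M (mpow M n x).
Proof. unfold mpow. rewrite <- Nat.iter_succ_r. reflexivity. Qed.

Definition contracts (M : M2) (K r : R) : Prop :=
  0 < K /\ 0 <= r < 1 /\ forall n x, norm1 (mpow M n x) <= K * r ^ n * norm1 x.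

Lemma geom_tail (u : nat -> R) C r : 0 <= r < 1 ->
  (forall n, Rabs (u (S n) - u n) <= C * r ^ n) ->
  forall n k, Rabs (u (n + k)%nat - u n) <= C * r ^ n / (1 - r).
Proof.
  intros Hr H.
  assert (HC : 0 <= C)
    by (pose proof (H O); simpl in *; pose proof (Rabs_pos (u 1%nat - u O)); lra).
  assert (Hk : forall n k, Rabs (u (n + k)%nat - u n) <= C * r ^ n * (1 - r ^ k) / (1 - r)).
  { intros n k. induction k.
    - rewrite Nat.add_0_r, Rminus_diag, Rabs_R0. simpl. unfold Rdiv. lra.
    - replace (u (n + S k)%nat - u n) with ((u (S (n + k)) - u (n + k)%nat) + (u (n + k)%nat - u n))
        by (rewrite Nat.add_succ_r; ring).
      eapply Rle_trans; [apply Rabs_triang|].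
      pose proof (H (n + k)%nat) as Hnk. rewrite pow_add in Hnk.
      replace (C * r ^ n * (1 - r ^ S k) / (1 - r)) with
        (C * (r ^ n * r ^ k) + C * r ^ n * (1 - r ^ k) / (1 - r)) by (simpl; field; lra).
      lra. }
  intros n k. eapply Rle_trans; [apply Hk|].
  pose proof (pow_le r n ltac:(lra)). pose proof (pow_le r k ltac:(lra)).
  unfold Rdiv. apply Rmult_le_compat_r; [apply Rlt_le, Rinv_0_lt_compat; lra|].
  assert (0 <= C * r ^ n) by (apply Rmult_le_pos; lra). nra.
Qed.

Lemma geom_cv (u : nat -> R) C r : 0 <= r < 1 ->
  (forall n, Rabs (u (S n) - u n) <= C * r ^ n) -> exists l, Un_cv u l.
Proof.
  intros Hr H. destruct (R_complete u) as [l Hl]; [|exists l; exact Hl].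
  intros eps Heps.
  assert (HC : 0 <= C)
    by (pose proof (H O); simpl in *; pose proof (Rabs_pos (u 1%nat - u O)); lra).
  destruct (pow_lt_1_zero r ltac:(rewrite Rabs_right; lra) (eps * (1 - r) / (2 * C + 1)))
    as [N HN].
  { apply Rdiv_lt_0_compat; nra. }
  exists N. intros n m Hn Hm. unfold Rdist.
  pose proof (geom_tail u C r Hr H N (n - N)) as Hn'.
  pose proof (geom_tail u C r Hr H N (m - N)) as Hm'.
  replace (N + (n - N))%nat with n in Hn' by lia.
  replace (N + (m - N))%nat with m in Hm' by lia.
  specialize (HN N (le_n N)). rewrite Rabs_right in HN by (apply Rle_ge, pow_le; lra).
  assert (C * r ^ N / (1 - r) < eps / 2).
  { apply (Rmult_lt_reg_r (1 - r)); [lra|]. unfold Rdiv.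
    rewrite Rmult_assoc, Rinv_l, Rmult_1_r by lra.
    apply (Rmult_lt_compat_r (2 * C + 1)) in HN; [|lra].
    unfold Rdiv in HN. rewrite Rmult_assoc, Rinv_l, Rmult_1_r in HN by lra.
    pose proof (pow_le r N ltac:(lra)). nra. }
  replace (u n - u m) with ((u n - u N) - (u m - u N)) by ring.
  eapply Rle_lt_trans; [apply Rabs_triang|]. rewrite Rabs_Ropp. lra.
Qed.

Lemma lim_abs_bound (u : nat -> R) l M : Un_cv u l -> (forall n, Rabs (u n) <= M) -> Rabs l <= M.
Proof.
  intros Hu Hb. destruct (Rle_lt_dec (Rabs l) M) as [h|h]; auto.
  destruct (Hu (Rabs l - M)) as [N HN]; [lra|].
  specialize (HN N (le_n N)). specialize (Hb N). unfold Rdist in HN.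
  pose proof (Rabs_triang_inv l (u N)). rewrite Rabs_minus_sym in HN. lra.
Qed.

Definition cv1 (u : nat -> vec) (l : vec) : Prop :=
  forall eps, eps > 0 -> exists N, forall n, (n >= N)%nat -> norm1 (vsub (u n) l) < eps.

Lemma cv1_vec_cv u l : cv1 u l <-> vec_cv u l.
Proof.
  split.
  - intros H. split; intros eps He; destruct (H eps He) as [N HN]; exists N; intros n Hn;
      specialize (HN n Hn); unfold norm1, vsub, vadd, vopp, Rdist in *; cbn [fst snd] in *;
      pose proof (Rabs_pos (fst (u n) + - fst l)); pose proof (Rabs_pos (snd (u n) + - snd l));
      unfold Rminus; lra.
  - intros [H1 H2] eps He.
    destruct (H1 (eps/2)) as [N1 HN1]; [lra|]. destruct (H2 (eps/2)) as [N2 HN2]; [lra|].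
    exists (N1 + N2)%nat. intros n Hn.
    specialize (HN1 n ltac:(lia)). specialize (HN2 n ltac:(lia)).
    unfold norm1, vsub, vadd, vopp, Rdist in *; cbn [fst snd] in *. unfold Rminus in *. lra.
Qed.

Lemma cv1_unique u l1 l2 : cv1 u l1 -> cv1 u l2 -> l1 = l2.
Proof.
  rewrite !cv1_vec_cv. intros [H1 H1'] [H2 H2'].
  apply vec_ext; eapply UL_sequence; eauto.
Qed.

Lemma cv1_ext u w l : (forall n, u n = w n) -> cv1 u l -> cv1 w l.
Proof. intros E H eps He. destruct (H eps He) as [N HN]. exists N. intros n Hn. rewrite <- E. auto. Qed.

Lemma cv1_shift u l : cv1 u l <-> cv1 (fun n => u (S n)) l.
Proof.
  split; intros H eps He; destruct (H eps He) as [N HN].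
  - exists N. intros n Hn. apply HN. lia.
  - exists (S N). intros n Hn. destruct n; [lia|]. apply HN. lia.
Qed.

Lemma cv1_const d : cv1 (fun _ => d) d.
Proof.
  intros eps He. exists O. intros n _.
  replace (vsub d d) with vzero by vec_ring. unfold norm1, vzero; cbn [fst snd].
  rewrite Rabs_R0. lra.
Qed.

Lemma cv1_add u w l m : cv1 u l -> cv1 w m -> cv1 (fun n => vadd (u n) (w n)) (vadd l m).
Proof.
  intros Hu Hw eps He.
  destruct (Hu (eps/2)) as [N1 H1]; [lra|]. destruct (Hw (eps/2)) as [N2 H2]; [lra|].
  exists (N1 + N2)%nat. intros n Hn.
  specialize (H1 n ltac:(lia)). specialize (H2 n ltac:(lia)).
  replace (vsub (vadd (u n) (w n)) (vadd l m)) with (vadd (vsub (u n) l) (vsub (w n) m))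
    by vec_ring.
  eapply Rle_lt_trans; [apply norm1_add|]. lra.
Qed.

Lemma cv1_opp u l : cv1 u l -> cv1 (fun n => vopp (u n)) (vopp l).
Proof.
  intros H eps He. destruct (H eps He) as [N HN]. exists N. intros n Hn.
  replace (vsub (vopp (u n)) (vopp l)) with (vopp (vsub (u n) l)) by vec_ring.
  rewrite norm1_opp. auto.
Qed.

Lemma cv1_map M u l : cv1 u l -> cv1 (fun n => mapply M (u n)) (mapply M l).
Proof.
  intros H eps He. pose proof (mnorm1_ge0 M).
  destruct (H (eps / (mnorm1 M + 1))) as [N HN]. { apply Rdiv_lt_0_compat; lra. }
  exists N. intros n Hn. specialize (HN n Hn).
  rewrite <- mapply_sub. eapply Rle_lt_trans; [apply norm1_mapply|].
  pose proof (norm1_ge0 (vsub (u n) l)).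
  apply (Rmult_lt_compat_l (mnorm1 M + 1)) in HN; [|lra].
  replace ((mnorm1 M + 1) * (eps / (mnorm1 M + 1))) with eps in HN by (field; lra). nra.
Qed.

Lemma Rabs_le_of_sqr (s M : R) : 0 <= M -> s ^ 2 <= M ^ 2 -> Rabs s <= M.
Proof.
  intros HM H. rewrite <- (Rabs_pos_eq M HM).
  apply Rsqr_le_abs_0. unfold Rsqr. nra.
Qed.

(* Solutions of s(n+2) = t s(n+1) - s(n)/3 with |t| ≤ 1 decay like (5/6)ⁿ:
   the quadratic form Q = s(n+1)² - t s(n) s(n+1) + s(n)²/3 is positive
   definite and gets multiplied by 1/3 at each step. *)
Lemma decay_det_pos (t : R) (s : nat -> R) : t ^ 2 <= 1 ->
  (forall n, s (S (S n)) = t * s (S n) - 1/3 * s n) ->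
  forall n, Rabs (s n) <= 4 * (5/6) ^ n * (Rabs (s O) + Rabs (s 1%nat)).
Proof.
  intros Ht Hrec.
  set (Q := fun n => s (S n) ^ 2 - t * s n * s (S n) + 1/3 * s n ^ 2).
  assert (HQ : forall n, Q n = (1/3) ^ n * Q O).
  { induction n; [simpl; ring|].
    replace (Q (S n)) with (1/3 * Q n) by (unfold Q; rewrite Hrec; field).
    rewrite IHn; simpl; ring. }
  assert (Hdef : forall n, s n ^ 2 <= 12 * Q n).
  { intro n. unfold Q.
    assert (E : 12 * (s (S n) ^ 2 - t * s n * s (S n) + 1/3 * s n ^ 2) - s n ^ 2
              = 3 * (s n - 2 * t * s (S n)) ^ 2 + 12 * ((1 - t ^ 2) * s (S n) ^ 2)) by field.
    pose proof (pow2_ge_0 (s n - 2 * t * s (S n))).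
    assert (0 <= (1 - t ^ 2) * s (S n) ^ 2) by (apply Rmult_le_pos; [lra|apply pow2_ge_0]).
    lra. }
  assert (HQ0 : Q O <= (Rabs (s O) + Rabs (s 1%nat)) ^ 2).
  { unfold Q. set (x := s O). set (y := s 1%nat).
    assert (Rabs t <= 1) by (apply Rabs_le_of_sqr; lra).
    assert (Rabs (t * x * y) <= Rabs x * Rabs y).
    { rewrite !Rabs_mult. pose proof (Rabs_pos x); pose proof (Rabs_pos y).
      pose proof (Rmult_le_pos _ _ (Rabs_pos x) (Rabs_pos y)). nra. }
    pose proof (Rle_abs (- (t * x * y))). rewrite Rabs_Ropp in *.
    rewrite <- (pow2_abs x), <- (pow2_abs y).
    pose proof (Rabs_pos x); pose proof (Rabs_pos y). nra. }
  intro n. apply Rabs_le_of_sqr.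
  { pose proof (Rabs_pos (s O)); pose proof (Rabs_pos (s 1%nat)).
    pose proof (pow_le (5/6) n ltac:(lra)). repeat apply Rmult_le_pos; lra. }
  assert (Hpow : (1/3) ^ n <= ((5/6) ^ n) ^ 2).
  { rewrite <- pow_mult, Nat.mul_comm, pow_mult. apply pow_incr; lra. }
  pose proof (Hdef n) as Hn. rewrite HQ in Hn.
  pose proof (pow_le (1/3) n ltac:(lra)).
  assert (0 <= Q O) by (pose proof (Hdef O); pose proof (pow2_ge_0 (s O)); lra).
  set (S0 := Rabs (s O) + Rabs (s 1%nat)) in *.
  replace ((4 * (5 / 6) ^ n * S0) ^ 2) with (16 * ((5/6) ^ n) ^ 2 * S0 ^ 2) by ring.
  pose proof (pow2_ge_0 S0).
  nra.
Qed.

(* Solutions of s(n+2) = t s(n+1) + s(n)/3 with |t| ≤ 1/3 decay like (5/6)ⁿ: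
   the weighted norm |s(n+1)| + |s(n)|/2 shrinks by 5/6 at each step. *)
Lemma decay_det_neg (t : R) (s : nat -> R) : Rabs t <= 1/3 ->
  (forall n, s (S (S n)) = t * s (S n) + 1/3 * s n) ->
  forall n, Rabs (s n) <= 4 * (5/6) ^ n * (Rabs (s O) + Rabs (s 1%nat)).
Proof.
  intros Ht Hrec.
  set (N := fun n => Rabs (s (S n)) + 1/2 * Rabs (s n)).
  assert (HN : forall n, N n <= (5/6) ^ n * N O).
  { induction n; [simpl; lra|].
    assert (N (S n) <= 5/6 * N n).
    { unfold N. rewrite Hrec.
      eapply Rle_trans; [apply Rplus_le_compat_r, Rabs_triang|].
      rewrite !Rabs_mult, (Rabs_pos_eq (1/3)) by lra.
      pose proof (Rabs_pos (s n)); pose proof (Rabs_pos (s (S n))).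
      pose proof (Rmult_le_compat_r _ _ _ (Rabs_pos (s (S n))) Ht). lra. }
    simpl. pose proof (Rabs_pos (s n)); pose proof (Rabs_pos (s (S n))). nra. }
  intro n. pose proof (HN n). unfold N in *.
  pose proof (Rabs_pos (s n)); pose proof (Rabs_pos (s (S n))).
  pose proof (Rabs_pos (s O)); pose proof (Rabs_pos (s 1%nat)).
  pose proof (pow_le (5/6) n ltac:(lra)).
  nra.
Qed.

(* If M satisfies M² = tM - δI and every scalar solution of the matching
   recurrence decays like (5/6)ⁿ, then M contracts: the coordinates of Mⁿx
   are such solutions. *)
Lemma contracts_of_recurrence (M : M2) (t dl : R) :
  (forall s : nat -> R, (forall n, s (S (S n)) = t * s (S n) - dl * s n) ->
     forall n, Rabs (s n) <= 4 * (5/6) ^ n * (Rabs (s O) + Rabs (s 1%nat))) ->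
  (forall x, mapply M (mapply M x) = vsub (vscale t (mapply M x)) (vscale dl x)) ->
  contracts M (8 * (1 + mnorm1 M)) (5/6).
Proof.
  intros Hdec HCH. pose proof (mnorm1_ge0 M).
  split; [lra|]. split; [lra|].
  intros n x.
  assert (coord : forall c : vec -> R, (forall y z, c (vsub y z) = c y - c z) ->
            (forall a y, c (vscale a y) = a * c y) ->
            Rabs (c (mpow M n x)) <= 4 * (5/6) ^ n * (Rabs (c x) + Rabs (c (mapply M x)))).
  { intros c Hsub Hsc. apply (Hdec (fun k => c (mpow M k x))).
    intro k. rewrite !mpow_S, HCH, Hsub, !Hsc. reflexivity. }
  pose proof (coord fst (fun _ _ => eq_refl) (fun _ _ => eq_refl)) as H1.
  pose proof (coord snd (fun _ _ => eq_refl) (fun _ _ => eq_refl)) as H2.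
  pose proof (norm1_mapply M x) as Hb.
  unfold norm1 in *.
  pose proof (pow_le (5/6) n ltac:(lra)).
  pose proof (Rabs_pos (fst x)); pose proof (Rabs_pos (snd x)).
  pose proof (Rabs_pos (fst (mapply M x))); pose proof (Rabs_pos (snd (mapply M x))).
  set (r := (5/6) ^ n) in *.
  nra.
Qed.

Lemma char_poly_identities (A : M2) (p q : R) : q <> 0 -> char_poly_is A p q ->
  (forall x, mapply A (mapply (minv A) x) = x) /\
  (forall x, mapply (minv A) (mapply A x) = x) /\
  (forall x, mapply A (mapply A x) = vadd (vscale (-p) (mapply A x)) (vscale (-q) x)) /\
  (forall x, mapply (minv A) (mapply (minv A) x)
             = vsub (vscale (-p/q) (mapply (minv A) x)) (vscale (1/q) x)).
Proof.
  intros Hq Hc. destruct A as [a b c d].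
  pose proof (Hc 0) as H0. pose proof (Hc 1) as H1. cbn [e11 e12 e21 e22] in H0, H1.
  assert (Hdet : a * d - b * c = q) by nra.
  assert (Htr : p = - (a + d)) by nra.
  subst q p.
  unfold vsub, mapply, minv, mdet, vadd, vscale, vopp; cbn [e11 e12 e21 e22].
  split; [|split; [|split]]; intro x; apply vec_ext; cbn [fst snd]; field; auto.
Qed.

(* An expanding matrix has no real eigenvalue in [-1, 1], so its
   characteristic polynomial f has no root there; by the intermediate value
   theorem f(1) and f(-1) have the sign of f(0) = q. *)
Lemma expanding_char_sign (A : M2) (p q : R) : char_poly_is A p q -> expanding A ->
  0 < (1 + p + q) * q /\ 0 < (1 - p + q) * q.
Proof.
  intros Hc Hexp.
  assert (no_root : forall z, -1 <= z <= 1 -> z ^ 2 + p * z + q <> 0).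
  { intros z Hz Hroot. specialize (Hexp (z, 0)).
    assert (Heig : is_eigenvalue A (z, 0)).
    { unfold is_eigenvalue, Csub, Cmul, Creal. cbn [fst snd]. specialize (Hc z).
      apply vec_ext; cbn [fst snd]; nra. }
    specialize (Hexp Heig). cbn [fst snd] in Hexp. nra. }
  set (f := fun z => z ^ 2 + p * z + q).
  assert (Hf : continuity f) by (unfold f; reg).
  split; apply Rnot_le_lt; intro Hle.
  - destruct (IVT_cor f 0 1 Hf ltac:(lra)) as [z [Hz Ez]].
    + unfold f. replace ((0 ^ 2 + p * 0 + q) * (1 ^ 2 + p * 1 + q)) with ((1 + p + q) * q) by ring.
      exact Hle.
    + apply (no_root z); [lra | exact Ez].
  - destruct (IVT_cor f (-1) 0 Hf ltac:(lra)) as [z [Hz Ez]].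
    + unfold f. replace (((-1) ^ 2 + p * (-1) + q) * (0 ^ 2 + p * 0 + q)) with ((1 - p + q) * q) by ring.
      exact Hle.
    + apply (no_root z); [lra | exact Ez].
Qed.

Lemma admissible_coefficients (A : M2) (p q : Z) :
  char_poly_is A (IZR p) (IZR q) -> expanding A -> Z.abs q = 3%Z ->
  (q = 3 /\ -3 <= p <= 3 \/ q = -3 /\ -1 <= p <= 1)%Z.
Proof.
  intros Hc Hexp Hq.
  destruct (expanding_char_sign A _ _ Hc Hexp) as [H1 H2].
  assert (Z1 : (0 < (1 + p + q) * q)%Z)
    by (apply lt_IZR; rewrite mult_IZR, !plus_IZR; exact H1).
  assert (Z2 : (0 < (1 - p + q) * q)%Z)
    by (apply lt_IZR; rewrite mult_IZR, plus_IZR, minus_IZR; exact H2).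
  destruct (Z.abs_spec q) as [[_ Hq'] | [_ Hq']]; rewrite Hq' in Hq; nia.
Qed.

Lemma inverse_contracts (A : M2) (p q : Z) :
  expanding A -> char_poly_is A (IZR p) (IZR q) -> Z.abs q = 3%Z ->
  contracts (minv A) (8 * (1 + mnorm1 (minv A))) (5/6).
Proof.
  intros Hexp Hc Hq.
  assert (Hq0 : IZR q <> 0) by (apply not_0_IZR; lia).
  destruct (char_poly_identities _ _ _ Hq0 Hc) as (_ & _ & _ & HBB).
  apply (contracts_of_recurrence _ (- IZR p / IZR q) (1 / IZR q)); [|exact HBB].
  intros s Hs.
  destruct (admissible_coefficients A p q Hc Hexp Hq) as [[-> [Hlo Hhi]] | [-> [Hlo Hhi]]];
    apply IZR_le in Hlo, Hhi.
  - apply (decay_det_pos (- IZR p / 3)); [nra|].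
    intro n. rewrite Hs. field.
  - apply (decay_det_neg (IZR p / 3)).
    + apply Rabs_le; lra.
    + intro n. rewrite Hs. change (IZR (-3)) with (-3). field.
Qed.

Definition sum_norms (xs : list vec) : R := fold_right (fun x acc => norm1 x + acc) 0 xs.

Lemma sum_norms_ge0 xs : 0 <= sum_norms xs.
Proof. induction xs; simpl; [lra|]. pose proof (norm1_ge0 a); lra. Qed.

Lemma sum_norms_bound xs x : In x xs -> norm1 x <= sum_norms xs.
Proof.
  induction xs as [|y xs IH]; simpl; [tauto|].
  pose proof (norm1_ge0 y); pose proof (sum_norms_ge0 xs).
  intros [<- | Hin]; [lra|]. specialize (IH Hin). lra.
Qed.

Lemma psum_ext A dig1 dig2 : (forall k, dig1 (S k) = dig2 (S k)) ->
  forall n, psum A dig1 n = psum A dig2 n.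
Proof. intros E n. induction n; simpl; [reflexivity|]. rewrite IHn, E. reflexivity. Qed.

Lemma psum_cons A dig n :
  psum A dig (S n) = mapply (minv A) (vadd (dig 1%nat) (psum A (fun k => dig (S k)) n)).
Proof.
  induction n.
  - change (psum A dig 1) with (vadd vzero (mapply (minv A) (dig 1%nat))). simpl psum. vec_ring.
  - change (psum A dig (S (S n))) with
      (vadd (psum A dig (S n)) (mapply (minv A) (mpow (minv A) (S n) (dig (S (S n)))))).
    rewrite IHn. simpl psum. rewrite <- !mapply_add. f_equal.
    change (mapply (minv A) (Nat.iter n (mapply (minv A)) ?x)) with (mpow (minv A) (S n) x).
    vec_ring.
Qed.

Lemma psum_S A dig n :
  psum A dig (S n) = vadd (psum A dig n) (mpow (minv A) (S n) (dig (S n))).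
Proof. reflexivity. Qed.

Section SelfAffine.
Variables (A : M2) (D : list vec).
Hypothesis HAB : forall x, mapply A (mapply (minv A) x) = x.
Hypothesis HBA : forall x, mapply (minv A) (mapply A x) = x.
Variables K r : R.
Hypothesis HC : contracts (minv A) K r.
Let T := self_affine_set A D.

Definition T_radius : R := 2 * (K * sum_norms D) / (1 - r).

Lemma psum_converges dig : (forall i, In (dig i) D) ->
  exists l, vec_cv (psum A dig) l /\ norm1 l <= T_radius.
Proof.
  intros Hd. destruct HC as [HK [Hr Hc]].
  pose proof (sum_norms_ge0 D) as HDn.
  assert (Hstep : forall n, norm1 (vsub (psum A dig (S n)) (psum A dig n)) <= (K * sum_norms D) * r ^ n).
  { intro n. rewrite psum_S.
    replace (vsub (vadd (psum A dig n) (mpow (minv A) (S n) (dig (S n)))) (psum A dig n))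
      with (mpow (minv A) (S n) (dig (S n))) by vec_ring.
    eapply Rle_trans; [apply Hc|].
    pose proof (sum_norms_bound D _ (Hd (S n))). pose proof (pow_le r n ltac:(lra)).
    pose proof (norm1_ge0 (dig (S n))). simpl.
    assert (0 <= K * r ^ n) by (apply Rmult_le_pos; lra).
    assert (K * (r * r ^ n) <= K * r ^ n) by nra. nra. }
  assert (H1 : forall n, Rabs (fst (psum A dig (S n)) - fst (psum A dig n)) <= (K * sum_norms D) * r ^ n).
  { intro n. specialize (Hstep n). unfold norm1, vsub, vadd, vopp in Hstep. cbn [fst snd] in Hstep.
    pose proof (Rabs_pos (snd (psum A dig (S n)) + - snd (psum A dig n))). unfold Rminus. lra. }
  assert (H2 : forall n, Rabs (snd (psum A dig (S n)) - snd (psum A dig n)) <= (K * sum_norms D) * r ^ n).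
  { intro n. specialize (Hstep n). unfold norm1, vsub, vadd, vopp in Hstep. cbn [fst snd] in Hstep.
    pose proof (Rabs_pos (fst (psum A dig (S n)) + - fst (psum A dig n))). unfold Rminus. lra. }
  destruct (geom_cv _ _ _ Hr H1) as [l1 Hl1].
  destruct (geom_cv _ _ _ Hr H2) as [l2 Hl2].
  exists (l1, l2). split; [split; assumption|].
  assert (B1 : Rabs l1 <= K * sum_norms D * 1 / (1 - r)).
  { apply (lim_abs_bound _ _ _ Hl1). intro n.
    pose proof (geom_tail _ _ _ Hr H1 O n) as G. simpl in G. rewrite Rminus_0_r in G. exact G. }
  assert (B2 : Rabs l2 <= K * sum_norms D * 1 / (1 - r)).
  { apply (lim_abs_bound _ _ _ Hl2). intro n.
    pose proof (geom_tail _ _ _ Hr H2 O n) as G. simpl in G. rewrite Rminus_0_r in G. exact G. }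
  unfold norm1, T_radius. cbn [fst snd]. rewrite Rmult_1_r in B1, B2. unfold Rdiv in *. lra.
Qed.

Lemma T_bounded t : T t -> norm1 t <= T_radius.
Proof.
  intros [dig [Hd Hcv]]. destruct (psum_converges dig Hd) as [l [Hl Hb]].
  apply cv1_vec_cv in Hcv. apply cv1_vec_cv in Hl.
  rewrite (cv1_unique _ _ _ Hcv Hl). exact Hb.
Qed.

Lemma T_image d t : In d D -> T t -> T (mapply (minv A) (vadd d t)).
Proof.
  intros Hd [dig [Hdig Hcv]].
  exists (fun k => match k with O | S O => d | S k' => dig k' end). split.
  { intros [|[|k]]; auto. }
  apply cv1_vec_cv. apply cv1_vec_cv in Hcv.
  apply cv1_shift. eapply cv1_ext; [|exact (cv1_map (minv A) _ _ (cv1_add _ _ _ _ (cv1_const d) Hcv))].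
  intro n. cbv beta. rewrite psum_cons. f_equal. f_equal. apply psum_ext. reflexivity.
Qed.

Lemma psum_tail_cv dig t : vec_cv (psum A dig) t ->
  vec_cv (psum A (fun k => dig (S k))) (vsub (mapply A t) (dig 1%nat)).
Proof.
  rewrite <- !cv1_vec_cv. intros Hcv.
  apply cv1_shift, (cv1_map A), (fun H => cv1_add _ _ _ _ H (cv1_const (vopp (dig 1%nat)))) in Hcv.
  eapply cv1_ext; [|exact Hcv]. intro n. cbv beta. rewrite psum_cons, HAB. vec_ring.
Qed.

Lemma inv_step t d : t = mapply (minv A) (vadd d (vsub (mapply A t) d)).
Proof.
  replace (vadd d (vsub (mapply A t) d)) with (mapply A t) by vec_ring.
  symmetry. apply HBA.
Qed.

Lemma T_decompose t : T t -> exists d t', In d D /\ T t' /\ t = mapply (minv A) (vadd d t').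
Proof.
  intros [dig [Hd Hcv]]. exists (dig 1%nat), (vsub (mapply A t) (dig 1%nat)).
  split; [auto|]. split; [|apply inv_step].
  exists (fun k => dig (S k)). split; [auto|]. apply psum_tail_cv; auto.
Qed.

Definition cyl (w : list vec) (x : vec) : vec :=
  fold_right (fun d y => mapply (minv A) (vadd d y)) x w.

Lemma cyl_in_T w t : Forall (fun d => In d D) w -> T t -> T (cyl w t).
Proof. induction 1; simpl; auto. intros Ht. apply T_image; auto. Qed.

Lemma cyl_app w1 w2 x : cyl (w1 ++ w2) x = cyl w1 (cyl w2 x).
Proof. unfold cyl. apply fold_right_app. Qed.

Lemma cyl_diff w x y : vsub (cyl w x) (cyl w y) = mpow (minv A) (length w) (vsub x y).
Proof.
  induction w; simpl; [reflexivity|].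
  rewrite <- IHw, <- mapply_sub. f_equal. vec_ring.
Qed.

Fixpoint prefix (dig : nat -> vec) (n : nat) : list vec :=
  match n with O => nil | S k => dig 1%nat :: prefix (fun i => dig (S i)) k end.

Lemma prefix_length dig n : length (prefix dig n) = n.
Proof. revert dig; induction n; intros; simpl; auto. Qed.

Lemma prefix_in dig n : (forall i, In (dig i) D) -> Forall (fun d => In d D) (prefix dig n).
Proof. revert dig; induction n; intros dig H; simpl; constructor; auto. Qed.

Lemma prefix_snoc dig n : prefix dig (S n) = prefix dig n ++ (dig (S n) :: nil).
Proof.
  revert dig; induction n; intros dig; [reflexivity|].
  change (prefix dig (S (S n))) with (dig 1%nat :: prefix (fun i => dig (S i)) (S n)).
  rewrite IHn. reflexivity.
Qed.

Lemma in_prefix_cylinder dig t : (forall i, In (dig i) D) -> vec_cv (psum A dig) t ->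
  forall n, exists t', T t' /\ t = cyl (prefix dig n) t'.
Proof.
  intros Hd Hcv n. revert dig t Hd Hcv. induction n; intros dig t Hd Hcv.
  - exists t. split; [exists dig; auto | reflexivity].
  - destruct (IHn (fun k => dig (S k)) _ (fun i => Hd (S i)) (psum_tail_cv _ _ Hcv))
      as [t' [Ht' E]].
    exists t'. split; auto. simpl. rewrite <- E. apply inv_step.
Qed.

Lemma cylinders_shrink dig x : (forall i, In (dig i) D) -> vec_cv (psum A dig) x ->
  forall eps, eps > 0 -> exists n, forall t, T t -> vdist x (cyl (prefix dig n) t) < eps.
Proof.
  intros Hd Hx eps He.
  pose proof HC as [HK [Hr Hc]].
  assert (Tx : T x) by (exists dig; auto).
  pose proof (T_bounded x Tx). pose proof (norm1_ge0 x).
  set (M := T_radius) in *.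
  destruct (pow_lt_1_zero r ltac:(rewrite Rabs_right; lra) (eps / (K * (2 * M) + 1))) as [n Hpn].
  { apply Rdiv_lt_0_compat; nra. }
  exists n. intros t Tt.
  destruct (in_prefix_cylinder dig x Hd Hx n) as [t' [Tt' Ex]].
  rewrite Ex at 1.
  eapply Rle_lt_trans; [apply vdist_le_norm1|]. rewrite cyl_diff.
  eapply Rle_lt_trans; [apply Hc|]. rewrite prefix_length.
  pose proof (norm1_sub t' t). pose proof (T_bounded _ Tt). pose proof (T_bounded _ Tt').
  specialize (Hpn n (le_n n)). rewrite Rabs_right in Hpn by (apply Rle_ge, pow_le; lra).
  pose proof (pow_le r n ltac:(lra)).
  apply (Rmult_lt_compat_r (K * (2 * M) + 1)) in Hpn; [|nra].
  unfold Rdiv in Hpn. rewrite Rmult_assoc, Rinv_l, Rmult_1_r in Hpn by nra.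
  assert (K * r ^ n * norm1 (vsub t' t) <= K * r ^ n * (2 * M))
    by (apply Rmult_le_compat_l; [nra | unfold M in *; lra]).
  nra.
Qed.

End SelfAffine.

Section HataCriterion.
Variable A : M2.
Variables d0 d1 d2 : vec.
Hypothesis HAB : forall x, mapply A (mapply (minv A) x) = x.
Hypothesis HBA : forall x, mapply (minv A) (mapply A x) = x.
Variables K r : R.
Hypothesis HC : contracts (minv A) K r.
Let D := d0 :: d1 :: d2 :: nil.
Let T := self_affine_set A D.
Let words_in_D (w : list vec) := Forall (fun d => In d D) w.

Definition neighbours (da db : vec) : Prop :=
  exists t t', T t /\ T t' /\ vadd da t = vadd db t'.

Lemma neighbours_same_side (P Q : vec -> Prop) da db : In da D -> neighbours da db ->
  (forall x, T x -> P x -> Q x -> False) ->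
  (forall t, T t -> P (mapply (minv A) (vadd da t))) ->
  (forall t, T t -> Q (mapply (minv A) (vadd db t))) -> False.
Proof.
  intros Hda [t [t' [Tt [Tt' E]]]] disj HP HQ.
  apply (disj (mapply (minv A) (vadd da t))); [apply T_image; auto | auto |].
  rewrite E. auto.
Qed.

(* Induction on N: the level-1 pieces are one-sided by induction, and
   neighbouring pieces must be on the same side. *)
Lemma one_sided_of_cylinders : neighbours d0 d1 -> (neighbours d2 d0 \/ neighbours d2 d1) ->
  forall N (U V : vec -> Prop),
  (forall x, T x -> U x \/ V x) -> (forall x, T x -> U x -> V x -> False) ->
  (forall w, length w = N -> words_in_D w ->
     (forall t, T t -> U (cyl A w t)) \/ (forall t, T t -> V (cyl A w t))) ->
  (forall t, T t -> U t) \/ (forall t, T t -> V t).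
Proof.
  intros E01 E2 N. induction N; intros U V cov disj Hw.
  - exact (Hw nil eq_refl (Forall_nil _)).
  - set (piece := fun d t => mapply (minv A) (vadd d t)).
    assert (side : forall d, In d D -> (forall t, T t -> U (piece d t)) \/
                                       (forall t, T t -> V (piece d t))).
    { intros d Hd. apply (IHN (fun x => U (piece d x)) (fun x => V (piece d x))).
      - intros x Tx. apply cov, T_image; auto.
      - intros x Tx. apply disj, T_image; auto.
      - intros w Hl Hi. apply (Hw (d :: w)); simpl; auto. constructor; auto. }
    assert (disj' : forall x, T x -> V x -> U x -> False) by (intros; eapply disj; eauto).
    assert (I0 : In d0 D) by (simpl; auto). assert (I1 : In d1 D) by (simpl; auto).
    assert (I2 : In d2 D) by (simpl; auto).
    assert (whole : forall P : vec -> Prop, (forall t, T t -> P (piece d0 t)) ->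
      (forall t, T t -> P (piece d1 t)) -> (forall t, T t -> P (piece d2 t)) ->
      forall t, T t -> P t).
    { intros P h0 h1 h2 t Tt. destruct (T_decompose A D HAB HBA t Tt) as [d [t' [Hd [Tt' ->]]]].
      simpl in Hd. destruct Hd as [<-|[<-|[<-|[]]]]; unfold piece in *; auto. }
    destruct (side d0 I0) as [a0|a0]; destruct (side d1 I1) as [a1|a1];
    destruct (side d2 I2) as [a2|a2];
    try (left; apply whole; assumption); try (right; apply whole; assumption); exfalso;
    try (eapply (neighbours_same_side _ _ d0 d1 I0 E01 disj); eassumption);
    try (eapply (neighbours_same_side _ _ d0 d1 I0 E01 disj'); eassumption);
    destruct E2 as [E2|E2];
    try (eapply (neighbours_same_side _ _ d2 _ I2 E2 disj); eassumption);
    try (eapply (neighbours_same_side _ _ d2 _ I2 E2 disj'); eassumption).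
Qed.

Section Separation.
Variables U V : vec -> Prop.
Hypothesis oU : open2 U.
Hypothesis oV : open2 V.
Hypothesis cov : forall x, T x -> U x \/ V x.
Hypothesis disj : forall x, T x -> U x -> V x -> False.

Definition straddles (w : list vec) : Prop :=
  (exists t, T t /\ U (cyl A w t)) /\ (exists t, T t /\ V (cyl A w t)).

Lemma straddles_prefix w u : words_in_D u -> straddles (w ++ u) -> straddles w.
Proof.
  intros Hu [[t [Tt Ut]] [t' [Tt' Vt']]]. rewrite cyl_app in Ut, Vt'.
  split; [exists (cyl A u t) | exists (cyl A u t')]; split; auto; apply cyl_in_T; auto.
Qed.

Definition often_straddles (w : list vec) : Prop :=
  forall m, exists u, length u = m /\ words_in_D u /\ straddles (w ++ u).

(* König's lemma for the ternary tree of words. *)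
Lemma often_straddles_step w : often_straddles w ->
  exists d, In d D /\ often_straddles (w ++ d :: nil).
Proof.
  intros Hw. apply NNPP. intro Hn.
  assert (Hq : forall d, In d D -> exists m, forall u, length u = m -> words_in_D u ->
                 ~ straddles ((w ++ d :: nil) ++ u)).
  { intros d Hd. apply NNPP. intro Hm. apply Hn. exists d. split; auto.
    intro m. apply NNPP. intro Hm2. apply Hm. exists m. intros u Hl Hi Hb.
    apply Hm2. exists u. auto. }
  assert (Hup : forall d m m', (m <= m')%nat ->
     (forall u, length u = m -> words_in_D u -> ~ straddles ((w ++ d :: nil) ++ u)) ->
     forall u, length u = m' -> words_in_D u -> ~ straddles ((w ++ d :: nil) ++ u)).
  { intros d m m' Hle H u Hl Hi Hb.
    rewrite <- (firstn_skipn m u) in Hb, Hi. apply Forall_app in Hi. destruct Hi as [Hi1 Hi2].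
    rewrite app_assoc in Hb. apply straddles_prefix in Hb; auto.
    apply (H (firstn m u)); auto. apply firstn_length_le. lia. }
  destruct (Hq d0 ltac:(simpl; auto)) as [m0 H0].
  destruct (Hq d1 ltac:(simpl; auto)) as [m1 H1].
  destruct (Hq d2 ltac:(simpl; auto)) as [m2 H2].
  set (M := (m0 + m1 + m2)%nat).
  destruct (Hw (S M)) as [[|d u] [Hl [Hi Hb]]]; [discriminate|].
  simpl in Hl. injection Hl as Hl.
  inversion Hi as [|? ? Hd Hi']; subst.
  replace (w ++ d :: u) with ((w ++ d :: nil) ++ u) in Hb by (rewrite <- app_assoc; reflexivity).
  destruct Hd as [<-|[<-|[<-|[]]]];
    [refine (Hup d0 m0 M _ H0 u Hl Hi' Hb) | refine (Hup d1 m1 M _ H1 u Hl Hi' Hb)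
    | refine (Hup d2 m2 M _ H2 u Hl Hi' Hb)]; unfold M; lia.
Qed.

Definition next_digit (w : list vec) : vec :=
  epsilon (inhabits vzero) (fun d => In d D /\ often_straddles (w ++ d :: nil)).

Fixpoint konig_path (n : nat) : list vec :=
  match n with O => nil | S k => konig_path k ++ next_digit (konig_path k) :: nil end.

Lemma konig_path_spec : often_straddles nil ->
  forall n, often_straddles (konig_path n) /\ In (next_digit (konig_path n)) D.
Proof.
  intro H0.
  assert (H : forall n, often_straddles (konig_path n)).
  { induction n; auto. simpl.
    exact (proj2 (epsilon_spec (inhabits vzero) _ (often_straddles_step _ IHn))). }
  intro n. split; auto.
  exact (proj1 (epsilon_spec (inhabits vzero) _ (often_straddles_step _ (H n)))).
Qed.

(* Some level N has no straddling cylinder: otherwise the König path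
   converges to a point x of T, and the small cylinders around x, which
   straddle, contradict the openness of the side containing x. *)
Lemma no_straddling_level : exists N, forall w, length w = N -> words_in_D w -> ~ straddles w.
Proof.
  apply NNPP. intro Hn.
  assert (H0 : often_straddles nil).
  { intro m. apply NNPP. intro Hm. apply Hn. exists m. intros w Hl Hi Hb. apply Hm.
    exists w. auto. }
  pose proof (konig_path_spec H0) as HW.
  set (dig := fun k => next_digit (konig_path (pred k))).
  assert (Hdig : forall i, In (dig i) D) by (intro i; apply HW).
  assert (Hpre : forall n, konig_path n = prefix dig n).
  { induction n; auto. rewrite prefix_snoc, <- IHn. reflexivity. }
  assert (Hstr : forall n, straddles (konig_path n)).
  { intro n. destruct (proj1 (HW n) O) as [[|] [Hl [_ Hb]]]; [|discriminate].
    rewrite app_nil_r in Hb. exact Hb. }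
  assert (Hin : forall n t, T t -> T (cyl A (konig_path n) t))
    by (intros n t Tt; apply cyl_in_T; auto; rewrite Hpre; apply prefix_in; auto).
  destruct (psum_converges A D K r HC dig Hdig) as [x [Hx _]].
  assert (Tx : T x) by (exists dig; auto).
  destruct (cov x Tx) as [Ux|Vx].
  - destruct (oU x Ux) as [eps [He Hball]].
    destruct (cylinders_shrink A D HAB HBA K r HC dig x Hdig Hx eps He) as [n Hnear].
    destruct (Hstr n) as [_ [t [Tt Vt]]].
    apply (disj (cyl A (konig_path n) t)); auto. rewrite Hpre. auto.
  - destruct (oV x Vx) as [eps [He Hball]].
    destruct (cylinders_shrink A D HAB HBA K r HC dig x Hdig Hx eps He) as [n Hnear].
    destruct (Hstr n) as [[t [Tt Ut]] _].
    apply (disj (cyl A (konig_path n) t)); auto. rewrite Hpre. auto.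
Qed.

Lemma one_sided_level : exists N, forall w, length w = N -> words_in_D w ->
  (forall t, T t -> U (cyl A w t)) \/ (forall t, T t -> V (cyl A w t)).
Proof.
  destruct no_straddling_level as [N HN]. exists N. intros w Hl Hi.
  destruct (classic (forall t, T t -> U (cyl A w t))) as [h|h]; [left; auto|].
  right. apply not_all_ex_not in h. destruct h as [t1 h]. apply imply_to_and in h.
  destruct h as [Tt1 nU].
  intros t Tt. apply NNPP. intro nV. apply (HN w Hl Hi). split.
  - exists t. split; auto. destruct (cov (cyl A w t)); [apply cyl_in_T|..]; tauto.
  - exists t1. split; auto. destruct (cov (cyl A w t1)); [apply cyl_in_T|..]; tauto.
Qed.

End Separation.

Theorem connected_of_neighbours :
  neighbours d0 d1 -> (neighbours d2 d0 \/ neighbours d2 d1) -> connected2 T.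
Proof.
  intros E01 E2 [U [V [oU [oV [cov [[x0 [Tx0 Ux0]] [[y0 [Ty0 Vy0]] disj]]]]]]].
  destruct (one_sided_level U V oU oV cov disj) as [N HN].
  destruct (one_sided_of_cylinders E01 E2 N U V cov disj HN) as [h|h].
  - apply (disj y0); auto.
  - apply (disj x0); auto.
Qed.

End HataCriterion.

(* Digits d₀ = 0, d₁ = v, d₂ = v + sg·w, and their coordinates in the basis (v, w). *)
Inductive digit := D0 | D1 | D2.

Definition coords (v w : vec) (s : Z * Z) : vec :=
  vadd (vscale (IZR (fst s)) v) (vscale (IZR (snd s)) w).

Definition digit_coords (sg : Z) (i : digit) : Z * Z :=
  match i with D0 => (0, 0)%Z | D1 => (1, 0)%Z | D2 => (1, sg)%Z end.

(* If s = A⁻¹(dᵢ - dⱼ + s'), then s' = A s - (dᵢ - dⱼ); in coordinates A acts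
   by (s₁, s₂) ↦ (-q s₂, s₁ - p s₂) since A w = -p w - q v. *)
Definition next_state (p q sg : Z) (s : Z * Z) (i j : digit) : Z * Z :=
  ((- q * snd s - (fst (digit_coords sg i) - fst (digit_coords sg j)))%Z,
   (fst s - p * snd s - (snd (digit_coords sg i) - snd (digit_coords sg j)))%Z).

(* A neighbour table lists entries (s₁, s₂, i, j): from the state s the path
   continues with the digit pair (i, j) to next_state s i j. *)
Definition entry := (Z * Z * digit * digit)%type.

Definition same_state (s s' : Z * Z) : bool := (Z.eqb (fst s) (fst s') && Z.eqb (snd s) (snd s'))%bool.

Definition lookup (tbl : list entry) (s : Z * Z) : option entry :=
  find (fun e => same_state (fst (fst e)) s) tbl.

Definition in_table (tbl : list entry) (s : Z * Z) : bool :=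
  match lookup tbl s with Some _ => true | None => false end.

Definition table_closed (p q sg : Z) (tbl : list entry) : bool :=
  forallb (fun e => in_table tbl (next_state p q sg (fst (fst e)) (snd (fst e)) (snd e))) tbl.

Lemma lookup_spec tbl s e : lookup tbl s = Some e -> In e tbl /\ fst (fst e) = s.
Proof.
  intros H. apply find_some in H. destruct H as [Hin Heq]. split; auto.
  unfold same_state in Heq. apply andb_prop in Heq. destruct Heq as [E1 E2].
  apply Z.eqb_eq in E1, E2. destruct (fst (fst e)), s; cbn in *; subst; reflexivity.
Qed.

Definition chosen_pair (tbl : list entry) (s : Z * Z) : digit * digit :=
  match lookup tbl s with Some e => (snd (fst e), snd e) | None => (D0, D0) end.

Fixpoint state_path (p q sg : Z) (tbl : list entry) (s0 : Z * Z) (k : nat) : Z * Z :=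
  match k with
  | O => s0
  | S k' => let s := state_path p q sg tbl s0 k' in
            next_state p q sg s (fst (chosen_pair tbl s)) (snd (chosen_pair tbl s))
  end.

Lemma state_path_in_table p q sg tbl s0 : table_closed p q sg tbl = true ->
  in_table tbl s0 = true -> forall k, in_table tbl (state_path p q sg tbl s0 k) = true.
Proof.
  intros Hcl H0 k. induction k; auto. simpl. unfold chosen_pair.
  unfold in_table in IHk. destruct (lookup tbl _) as [e|] eqn:E; [|discriminate].
  destruct (lookup_spec _ _ _ E) as [Hin Hs].
  unfold table_closed in Hcl. rewrite forallb_forall in Hcl.
  specialize (Hcl e Hin). rewrite Hs in Hcl. exact Hcl.
Qed.

Lemma in_table_bound v w tbl s : in_table tbl s = true ->
  norm1 (coords v w s) <= sum_norms (map (fun e => coords v w (fst (fst e))) tbl).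
Proof.
  unfold in_table. destruct (lookup tbl s) as [e|] eqn:E; [|discriminate]. intros _.
  destruct (lookup_spec _ _ _ E) as [Hin <-].
  apply sum_norms_bound, (in_map (fun e => coords v w (fst (fst e))) _ _ Hin).
Qed.

Section NeighbourAutomaton.
Variable A : M2.
Variable v : vec.
Variables p q sg : Z.
Let w := mapply A v.
Let D := vzero :: v :: coords v w (1%Z, sg) :: nil.
Let T := self_affine_set A D.
Hypothesis HAB : forall x, mapply A (mapply (minv A) x) = x.
Hypothesis HBA : forall x, mapply (minv A) (mapply A x) = x.
Hypothesis HAw : mapply A w = vadd (vscale (- IZR p) w) (vscale (- IZR q) v).
Variables K r : R.
Hypothesis HC : contracts (minv A) K r.

Definition digit_vec (i : digit) : vec :=
  match i with D0 => vzero | D1 => v | D2 => coords v w (1%Z, sg) end.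

Lemma digit_vec_in i : In (digit_vec i) D.
Proof. destruct i; simpl; auto. Qed.

Lemma digit_vec_coords i : digit_vec i = coords v w (digit_coords sg i).
Proof. destruct i; [unfold coords; cbn; vec_ring .. | reflexivity]. Qed.

Lemma mapply_coords s : mapply A (coords v w s) = coords v w ((- q * snd s)%Z, (fst s - p * snd s)%Z).
Proof.
  unfold coords. rewrite mapply_add.
  replace (mapply A (vscale (IZR (snd s)) w)) with (vscale (IZR (snd s)) (mapply A w)) by vec_ring.
  rewrite HAw. cbn [fst snd]. rewrite minus_IZR, !mult_IZR, opp_IZR.
  unfold w. vec_ring.
Qed.

Lemma coords_step s i j :
  coords v w s = mapply (minv A)
    (vadd (vsub (digit_vec i) (digit_vec j)) (coords v w (next_state p q sg s i j))).
Proof.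
  rewrite <- (HBA (coords v w s)). f_equal.
  rewrite mapply_coords, !digit_vec_coords. unfold next_state, coords. cbn [fst snd].
  rewrite !minus_IZR, !mult_IZR, !opp_IZR. vec_ring.
Qed.

Lemma telescoping (st : nat -> Z * Z) (ij : nat -> digit * digit) :
  (forall k, st (S k) = next_state p q sg (st k) (fst (ij k)) (snd (ij k))) ->
  forall n, vadd (vsub (psum A (fun k => digit_vec (fst (ij (pred k)))) n)
                       (psum A (fun k => digit_vec (snd (ij (pred k)))) n))
                 (mpow (minv A) n (coords v w (st n))) = coords v w (st O).
Proof.
  intros Hst n. induction n; [simpl; vec_ring|].
  rewrite <- IHn, !psum_S, Hst, (coords_step (st n) (fst (ij n)) (snd (ij n))).
  rewrite mpow_mapply, <- mpow_S, mpow_add, mpow_sub. cbn [pred]. vec_ring.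
Qed.

Lemma bounded_path_difference (st : nat -> Z * Z) (ij : nat -> digit * digit) M :
  (forall k, st (S k) = next_state p q sg (st k) (fst (ij k)) (snd (ij k))) ->
  (forall k, norm1 (coords v w (st k)) <= M) ->
  exists t t', T t /\ T t' /\ vsub t t' = coords v w (st O).
Proof.
  intros Hst Hbd.
  set (dig := fun k => digit_vec (fst (ij (pred k)))).
  set (dig' := fun k => digit_vec (snd (ij (pred k)))).
  destruct (psum_converges A D K r HC dig (fun _ => digit_vec_in _)) as [t [Ht _]].
  destruct (psum_converges A D K r HC dig' (fun _ => digit_vec_in _)) as [t' [Ht' _]].
  exists t, t'. split; [exists dig; split; auto; intro; apply digit_vec_in|].
  split; [exists dig'; split; auto; intro; apply digit_vec_in|].
  apply cv1_vec_cv in Ht, Ht'.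
  apply (cv1_unique _ _ _ (cv1_add _ _ _ _ Ht (cv1_opp _ _ Ht'))).
  pose proof HC as [HK [Hr Hc]].
  pose proof (Hbd O). pose proof (norm1_ge0 (coords v w (st O))).
  intros eps He.
  destruct (pow_lt_1_zero r ltac:(rewrite Rabs_right; lra) (eps / (K * M + 1))) as [N HN].
  { apply Rdiv_lt_0_compat; nra. }
  exists N. intros n Hn. specialize (HN n Hn). rewrite Rabs_right in HN by (apply Rle_ge, pow_le; lra).
  rewrite <- (telescoping st ij Hst n). fold dig dig'.
  replace (vsub (vadd (psum A dig n) (vopp (psum A dig' n)))
                (vadd (vsub (psum A dig n) (psum A dig' n)) (mpow (minv A) n (coords v w (st n)))))
    with (vopp (mpow (minv A) n (coords v w (st n)))) by vec_ring.
  rewrite norm1_opp. eapply Rle_lt_trans; [apply Hc|].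
  pose proof (pow_le r n ltac:(lra)). pose proof (Hbd n).
  apply (Rmult_lt_compat_r (K * M + 1)) in HN; [|nra].
  unfold Rdiv in HN. rewrite Rmult_assoc, Rinv_l, Rmult_1_r in HN by nra.
  assert (K * r ^ n * norm1 (coords v w (st n)) <= K * r ^ n * M)
    by (apply Rmult_le_compat_l; [nra|auto]).
  nra.
Qed.

Lemma table_difference tbl s0 : table_closed p q sg tbl = true -> in_table tbl s0 = true ->
  exists t t', T t /\ T t' /\ vsub t t' = coords v w s0.
Proof.
  intros Hcl H0.
  apply (bounded_path_difference (state_path p q sg tbl s0)
           (fun k => chosen_pair tbl (state_path p q sg tbl s0 k))
           (sum_norms (map (fun e => coords v w (fst (fst e))) tbl))); [reflexivity|].
  intro k. apply in_table_bound, state_path_in_table; auto.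
Qed.

(* A table certifies connectedness when it is closed and contains the
   differences d₁ - d₀ = v and d₂ - d₀ or d₂ - d₁. *)
Definition certificate_ok (tbl : list entry) : bool :=
  (table_closed p q sg tbl && in_table tbl (1, 0)%Z
   && (in_table tbl (1, sg)%Z || in_table tbl (0, sg)%Z))%bool.

Theorem connected_of_certificate tbl : certificate_ok tbl = true -> connected2 T.
Proof.
  unfold certificate_ok. intros Hok.
  apply andb_prop in Hok as [Hok H2]. apply andb_prop in Hok as [Hcl H01].
  apply (connected_of_neighbours A vzero v (coords v w (1%Z, sg)) HAB HBA K r HC).
  - destruct (table_difference tbl _ Hcl H01) as [t [t' [Tt [Tt' E]]]].
    exists t, t'. repeat split; auto.
    rewrite (vsub_eq_add E). unfold coords; cbn [fst snd]. vec_ring.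
  - apply Bool.orb_prop in H2 as [H2 | H2];
      destruct (table_difference tbl _ Hcl H2) as [t [t' [Tt [Tt' E]]]];
      [left | right]; exists t', t; repeat split; auto;
      rewrite (vsub_eq_add E); unfold coords; cbn [fst snd]; vec_ring.
Qed.

End NeighbourAutomaton.

(* The neighbour table for (p, q, sg): the entries giving v ∈ T - T (namely
   v = A⁻¹(sg·(d₂ - d₁)) + 0) followed by a closed cycle of states reaching
   the coordinates of d₂ - d₀ = (1, sg) or d₂ - d₁ = (0, sg). *)
Local Open Scope Z_scope.
Definition neighbour_table (p q sg : Z) : list entry :=
  (if sg =? 1 then (1, 0, D2, D1) else (1, 0, D1, D2)) :: (0, 0, D0, D0) ::
  match q, p, sg with
  | 3, -3, 1 => [(0, 1, D2, D0); (-4, 2, D0, D1); (-5, 2, D0, D2)]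
  | 3, -3, -1 => [(1, -1, D2, D0); (2, -1, D1, D0)]
  | 3, -2, 1 => [(0, 1, D2, D1); (-3, 1, D0, D2); (-2, 0, D1, D2); (0, -1, D1, D2);
                 (3, -1, D2, D0); (2, 0, D2, D1)]
  | 3, -2, -1 => [(1, -1, D2, D0); (2, 0, D1, D2); (0, 1, D0, D2); (-2, 1, D0, D1);
                  (-2, 0, D2, D1); (0, -1, D2, D0); (2, -1, D1, D0)]
  | 3, -1, 1 => [(0, 1, D0, D1); (-2, 1, D0, D2); (-2, 0, D1, D2); (0, -1, D1, D0);
                 (2, -1, D2, D0); (2, 0, D2, D1)]
  | 3, -1, -1 => [(1, -1, D1, D0); (2, 0, D1, D2); (0, 1, D0, D2); (-2, 0, D2, D1);
                  (0, -1, D2, D0)]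
  | 3, 0, 1 => [(0, 1, D0, D1); (-2, 0, D1, D2); (0, -1, D1, D0); (2, 0, D2, D1)]
  | 3, 0, -1 => [(0, -1, D1, D0); (2, 0, D1, D2); (0, 1, D0, D1); (-2, 0, D2, D1)]
  | 3, 1, 1 => [(1, 1, D0, D1); (-2, 0, D1, D2); (0, -1, D2, D0); (2, 0, D2, D1);
                (0, 1, D0, D2)]
  | 3, 1, -1 => [(0, -1, D1, D0); (2, 1, D0, D2); (-2, 0, D2, D1)]
  | 3, 2, 1 => [(1, 1, D0, D2); (-2, 0, D1, D2); (0, -1, D2, D0); (2, 1, D0, D1)]
  | 3, 2, -1 => [(0, -1, D1, D2); (3, 1, D0, D2); (-2, 0, D2, D1)]
  | 3, 3, 1 => [(1, 1, D0, D2); (-2, -1, D1, D0); (2, 1, D0, D1)]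
  | 3, 3, -1 => [(0, -1, D0, D2); (4, 2, D0, D1); (-5, -2, D2, D0); (5, 2, D0, D2)]
  | -3, -1, 1 => [(0, 1, D2, D0); (2, 0, D2, D1)]
  | -3, -1, -1 => [(1, -1, D2, D1); (-3, 1, D2, D0); (2, -1, D0, D1); (-2, 1, D1, D0)]
  | -3, 0, 1 => [(1, 1, D2, D0); (2, 0, D2, D1); (0, 1, D1, D0)]
  | -3, 0, -1 => [(1, -1, D0, D2); (-2, 0, D2, D1); (0, -1, D0, D1)]
  | -3, 1, 1 => [(1, 1, D1, D2); (3, 1, D2, D0); (2, 1, D1, D0)]
  | -3, 1, -1 => [(0, -1, D0, D2); (-2, 0, D2, D1)]
  | _, _, _ => []
  end.

Lemma neighbour_tables_valid p q sg :
  (q = 3 /\ -3 <= p <= 3 \/ q = -3 /\ -1 <= p <= 1) -> (sg = 1 \/ sg = -1) ->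
  certificate_ok p q sg (neighbour_table p q sg) = true.
Proof.
  intros [[-> Hp] | [-> Hp]] Hsg;
    [assert (p = -3 \/ p = -2 \/ p = -1 \/ p = 0 \/ p = 1 \/ p = 2 \/ p = 3) by lia
    |assert (p = -1 \/ p = 0 \/ p = 1) by lia];
    repeat match goal with H : _ \/ _ |- _ => destruct H end; subst; vm_compute; reflexivity.
Qed.
Local Close Scope Z_scope.

Theorem digit_set_connected (A : M2) (p q sg : Z) (v d2 : vec) :
  expanding A -> char_poly_is A (IZR p) (IZR q) -> Z.abs q = 3%Z -> (sg = 1 \/ sg = -1)%Z ->
  d2 = vadd (vscale (IZR sg) (mapply A v)) v ->
  connected2 (self_affine_set A (vzero :: v :: d2 :: nil)).
Proof.
  intros Hexp Hc Hq Hsg ->.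
  assert (Hq0 : IZR q <> 0) by (apply not_0_IZR; lia).
  destruct (char_poly_identities _ _ _ Hq0 Hc) as (HAB & HBA & HAA & _).
  replace (vadd (vscale (IZR sg) (mapply A v)) v) with (coords v (mapply A v) (1%Z, sg))
    by (unfold coords; cbn [fst snd]; vec_ring).
  apply (connected_of_certificate A v p q sg HAB HBA (HAA v) _ _ (inverse_contracts A p q Hexp Hc Hq)
           (neighbour_table p q sg)).
  apply neighbour_tables_valid; auto.
  apply (admissible_coefficients A); auto.
Qed.

Theorem corollary3p5 (a b c d p q : Z) (v : R * R) :
  expanding (M2Z a b c d) ->
  char_poly_is (M2Z a b c d) (IZR p) (IZR q) ->
  Z.abs q = 3%Z ->
  lin_indep2 v (mapply (M2Z a b c d) v) ->
  connected2 (self_affine_set (M2Z a b c d)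
                (vzero :: v :: vadd (mapply (M2Z a b c d) v) v :: nil)) /\
  connected2 (self_affine_set (M2Z a b c d)
                (vzero :: v :: vadd (vopp (mapply (M2Z a b c d) v)) v :: nil)).
Proof.
  intros Hexp Hc Hq _.
  split; [apply (digit_set_connected _ p q 1) | apply (digit_set_connected _ p q (-1))];
    auto; vec_ring.
Qed.
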